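(* Let $x_1(t)$ be a smooth real function and $z_1(t),z_2(t),z_3(t)$ smooth complex functions satisfying $$\dot x_1=-3\,\mathrm{Im}(z_1z_2z_3),\quad \dot z_1=z_1(|z_2|^2-|z_3|^2)+ix_1\overline{z_2z_3},$$ $$\dot z_2=z_2(|z_3|^2-|z_1|^2)+ix_1\overline{z_3z_1},\quad \dot z_3=z_3(|z_1|^2-|z_2|^2)+ix_1\overline{z_1z_2},$$ with $\mathrm{Re}(z_1z_2z_3)=0$ at $t=0$, and with initial point whose orbit under the action $(x_1,z_1,z_2,z_3)\mapsto(rx_1,re^{i\phi_1}z_1,re^{i\phi_2}z_2,re^{-i(\phi_1+\phi_2)}z_3)$ ($r>0$, $\phi_1,\phi_2\in\mathbb{R}$) of $\mathbb{R}^+\times\mathrm{U}(1)^2$ is $3$-dimensional. Then the solution exists for all $t\in\mathbb{R}$, $\mathrm{Re}(z_1z_2z_3)=0$ for all $t$, $x_1^2+|z_1|^2+|z_2|^2+|z_3|^2$ is constant (and may be taken to be $1$), and $$M=\big\{\big(rx_1(t),re^{i\phi_1}z_1(t),re^{i\phi_2}z_2(t),re^{-i(\phi_1+\phi_2)}z_3(t)\big):r>0,\ \phi_1,\phi_2,t\in\mathbb{R}\big\}$$ is a coassociative $4$-fold in $\mathbb{R}^7$.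
   Context: $\mathbb{R}^7\cong\mathbb{R}\oplus\mathbb{C}^3$ via $z_1=x_2+ix_3$, $z_2=x_4+ix_5$, $z_3=x_6+ix_7$. Coassociative $4$-folds are oriented $4$-dimensional submanifolds calibrated by $\ast\varphi_0=d\mathbf{x}_{4567}+d\mathbf{x}_{2367}+d\mathbf{x}_{2345}+d\mathbf{x}_{1357}-d\mathbf{x}_{1346}-d\mathbf{x}_{1256}-d\mathbf{x}_{1247}$ (equivalently, suitably oriented $4$-folds on which $\varphi_0=d\mathbf{x}_{123}+d\mathbf{x}_{145}+d\mathbf{x}_{167}+d\mathbf{x}_{246}-d\mathbf{x}_{257}-d\mathbf{x}_{347}-d\mathbf{x}_{356}$ vanishes), where $d\mathbf{x}_{ij\dots k}=dx_i\wedge dx_j\wedge\dots\wedge dx_k$. *)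

From Stdlib Require Import Reals.
From Coquelicot Require Import Coquelicot.
Open Scope R_scope.

(** Points of R^7 as functions of the coordinate index; only indices 1..7 matter. *)
Definition vec7 := nat -> R.

Definition embed (x1 : R) (z1 z2 z3 : C) : vec7 := fun i =>
  match i with
  | 1%nat => x1 | 2%nat => Re z1 | 3%nat => Im z1
  | 4%nat => Re z2 | 5%nat => Im z2
  | 6%nat => Re z3 | 7%nat => Im z3
  | _ => 0 end.

Definition eiC (phi : R) : C := (cos phi, sin phi).

Definition act (r p1 p2 x1 : R) (z1 z2 z3 : C) : vec7 :=
  embed (r * x1) (Cmult (RtoC r) (Cmult (eiC p1) z1))
                 (Cmult (RtoC r) (Cmult (eiC p2) z2))
                 (Cmult (RtoC r) (Cmult (eiC (- (p1 + p2))) z3)).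

Definition dx3 (i j k : nat) (u v w : vec7) : R :=
  u i * (v j * w k - v k * w j)
  - u j * (v i * w k - v k * w i)
  + u k * (v i * w j - v j * w i).

Definition phi0 (u v w : vec7) : R :=
  dx3 1 2 3 u v w + dx3 1 4 5 u v w + dx3 1 6 7 u v w + dx3 2 4 6 u v w
  - dx3 2 5 7 u v w - dx3 3 4 7 u v w - dx3 3 5 6 u v w.

Definition lin_indep (n : nat) (v : nat -> vec7) : Prop :=
  forall c : nat -> R,
    (forall i, (1 <= i <= 7)%nat ->
       sum_f_R0 (fun k => c k * v k i) (n - 1) = 0) ->
    forall k, (k < n)%nat -> c k = 0.

Definition orbit_diff (x1 : R) (z1 z2 z3 : C) (k : nat) : vec7 := fun i =>
  match k with
  | 0%nat => Derive (fun s => act s 0 0 x1 z1 z2 z3 i) 1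
  | 1%nat => Derive (fun s => act 1 s 0 x1 z1 z2 z3 i) 0
  | _ => Derive (fun s => act 1 0 s x1 z1 z2 z3 i) 0
  end.

(** The orbit of the point under R^+ x U(1)^2 is 3-dimensional:
    the orbit map has rank 3 (at the identity, hence everywhere by equivariance). *)
Definition orbit_dim3 (x1 : R) (z1 z2 z3 : C) : Prop :=
  lin_indep 3 (orbit_diff x1 z1 z2 z3).

Definition is_global_solution (x1 : R -> R) (z1 z2 z3 : R -> C) : Prop :=
  forall t : R,
    is_derive x1 t (-3 * Im (Cmult (Cmult (z1 t) (z2 t)) (z3 t))) /\
    is_derive z1 t (Cplus (Cmult (z1 t) (RtoC (Cmod (z2 t) ^ 2 - Cmod (z3 t) ^ 2)))
                          (Cmult (Cmult Ci (RtoC (x1 t))) (Cconj (Cmult (z2 t) (z3 t))))) /\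
    is_derive z2 t (Cplus (Cmult (z2 t) (RtoC (Cmod (z3 t) ^ 2 - Cmod (z1 t) ^ 2)))
                          (Cmult (Cmult Ci (RtoC (x1 t))) (Cconj (Cmult (z3 t) (z1 t))))) /\
    is_derive z3 t (Cplus (Cmult (z3 t) (RtoC (Cmod (z1 t) ^ 2 - Cmod (z2 t) ^ 2)))
                          (Cmult (Cmult Ci (RtoC (x1 t))) (Cconj (Cmult (z1 t) (z2 t))))).

Definition partial4 (F : R -> R -> R -> R -> vec7) (r p1 p2 t : R) (k : nat) : vec7 :=
  fun i => match k with
  | 0%nat => Derive (fun s => F s p1 p2 t i) r
  | 1%nat => Derive (fun s => F r s p2 t i) p1
  | 2%nat => Derive (fun s => F r p1 s t i) p2
  | _ => Derive (fun s => F r p1 p2 s i) t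
  end.

(** The image of F restricted to {r > 0} is a (immersed) coassociative 4-fold:
    F is an immersion there (its differential has rank 4) and phi0 vanishes on
    every tangent 4-plane (phi0 is trilinear, so vanishing on triples of the
    basis vectors dF(e_j) is vanishing on the plane). *)
Definition coassociative_param (F : R -> R -> R -> R -> vec7) : Prop :=
  forall r p1 p2 t, 0 < r ->
    (forall i, (1 <= i <= 7)%nat ->
       ex_derive (fun s => F s p1 p2 t i) r /\ ex_derive (fun s => F r s p2 t i) p1 /\
       ex_derive (fun s => F r p1 s t i) p2 /\ ex_derive (fun s => F r p1 p2 s i) t) /\
    lin_indep 4 (partial4 F r p1 p2 t) /\
    forall j k l, (j < 4)%nat -> (k < 4)%nat -> (l < 4)%nat ->
      phi0 (partial4 F r p1 p2 t j) (partial4 F r p1 p2 t k)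
           (partial4 F r p1 p2 t l) = 0.

From Stdlib Require Import Reals Lra Lia Nsatz FunctionalExtensionality.
From Coquelicot Require Import Coquelicot.
Open Scope R_scope.

(* The vector field is polynomial and tangent to the spheres centred at 0, so after clamping it
   outside a large cube it becomes bounded and globally Lipschitz; Picard iteration gives a
   global solution of the clamped system, which stays on its initial sphere and so never feels
   the clamping.  Re(z1 z2 z3) and the radius are first integrals, and Gronwall's inequality
   for |z_i|^2 + |z_j|^2 shows that no two z_j vanish simultaneously if they do not at t = 0,
   which is what 3-dimensionality of the orbit means.  By equivariance the partial derivatives
   of (r, p1, p2, t) |-> r g(p1, p2) v(t) at P = g(p1, p2) v(t) are P, r J1 P, r J2 P, r X(P),
   where J1, J2 generate the torus action and X is the vector field: phi0 vanishes on them
   because Re(z1 z2 z3) = 0 at P, and they are independent because no two z_j vanish at P. *)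

Lemma continuous_of_lipschitz (f : R -> R) (K : R) :
  (forall s s', Rabs (f s - f s') <= K * Rabs (s - s')) -> forall x, continuous f x.
Proof.
intros H x. apply continuity_pt_filterlim. intros eps Heps.
assert (HK : 0 < Rabs K + 1) by (pose proof (Rabs_pos K); lra).
exists (eps / (Rabs K + 1)). split; [apply Rdiv_lt_0_compat; lra|].
intros y [_ Hy]. simpl in *. unfold R_dist in *.
eapply Rle_lt_trans; [apply H|].
apply Rle_lt_trans with ((Rabs K + 1) * Rabs (y - x)).
- pose proof (Rabs_pos (y - x)); pose proof (RRle_abs K); nra.
- apply Rmult_lt_reg_l with (/ (Rabs K + 1)); [apply Rinv_0_lt_compat; lra|].
  rewrite <- Rmult_assoc, Rinv_l by lra. unfold Rdiv in Hy. lra.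
Qed.

Lemma ex_RInt_lipschitz (f : R -> R) (K a b : R) :
  (forall s s', Rabs (f s - f s') <= K * Rabs (s - s')) -> ex_RInt f a b.
Proof.
intros H. apply (@ex_RInt_continuous R_CompleteNormedModule). intros z _.
exact (continuous_of_lipschitz f K H z).
Qed.

Lemma abs_RInt_le_pow (g : R -> R) (C : R) (k : nat) (t : R) :
  ex_RInt g 0 t -> 0 <= C ->
  (forall s, Rmin 0 t <= s <= Rmax 0 t -> Rabs (g s) <= C * Rabs s ^ k) ->
  Rabs (RInt g 0 t) <= C * Rabs t ^ S k / INR (S k).
Proof.
intros Hex HC Hb.
assert (HS : INR (S k) <> 0) by (apply not_0_INR; lia).
destruct (Rle_or_lt 0 t) as [Ht|Ht].
- assert (HI : is_RInt (fun s => C * s ^ k) 0 t (C * t ^ S k / INR (S k))).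
  { replace (C * t ^ S k / INR (S k)) with
      (minus ((fun s => C * s ^ S k / INR (S k)) t) ((fun s => C * s ^ S k / INR (S k)) 0))
      by (unfold minus, plus, opp; simpl; field; auto).
    apply (is_RInt_derive (fun s => C * s ^ S k / INR (S k)) (fun s => C * s ^ k)).
    + intros x _. auto_derive; auto. field. auto.
    + intros x _. apply (@ex_derive_continuous R_AbsRing R_NormedModule). auto_derive. auto. }
  rewrite (Rabs_pos_eq t Ht).
  apply (norm_RInt_le g (fun s => C * s ^ k) 0 t); auto.
  + intros x Hx. replace (C * x ^ k) with (C * Rabs x ^ k) by (rewrite Rabs_pos_eq; lra).
    apply Hb. rewrite Rmin_left, Rmax_right; lra.
  + apply (@RInt_correct R_CompleteNormedModule); auto.
- assert (HI : is_RInt (fun s => C * (- s) ^ k) t 0 (C * (- t) ^ S k / INR (S k))).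
  { replace (C * (- t) ^ S k / INR (S k)) with
      (minus ((fun s => - C * (- s) ^ S k / INR (S k)) 0) ((fun s => - C * (- s) ^ S k / INR (S k)) t))
      by (unfold minus, plus, opp; simpl; field; auto).
    apply (is_RInt_derive (fun s => - C * (- s) ^ S k / INR (S k)) (fun s => C * (- s) ^ k)).
    + intros x _. auto_derive; auto. field. auto.
    + intros x _. apply (@ex_derive_continuous R_AbsRing R_NormedModule). auto_derive. auto. }
  rewrite (Rabs_left t Ht), <- (opp_RInt_swap g t 0) by (apply ex_RInt_swap; auto).
  change (Rabs (- RInt g t 0) <= C * (- t) ^ S k / INR (S k)). rewrite Rabs_Ropp.
  apply (norm_RInt_le g (fun s => C * (- s) ^ k) t 0); [lra| | |exact HI].
  + intros x Hx. replace (C * (- x) ^ k) with (C * Rabs x ^ k).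
    * apply Hb. rewrite Rmin_right, Rmax_left; lra.
    * destruct (Req_dec x 0) as [->|]; [rewrite Rabs_R0, Ropp_0; reflexivity|].
      rewrite Rabs_left; lra.
  + apply (@RInt_correct R_CompleteNormedModule). apply ex_RInt_swap; auto.
Qed.

Lemma RInt_0_lipschitz (g : R -> R) (K M : R) :
  (forall s s', Rabs (g s - g s') <= K * Rabs (s - s')) -> (forall s, Rabs (g s) <= M) ->
  forall t t', Rabs (RInt g 0 t - RInt g 0 t') <= M * Rabs (t - t').
Proof.
intros Hl Hb t t'.
assert (Hex : forall a b, ex_RInt g a b) by (intros; apply (ex_RInt_lipschitz g K), Hl).
assert (E : RInt g 0 t = RInt g 0 t' + RInt g t' t)
  by (rewrite <- (RInt_Chasles g 0 t' t) by auto; reflexivity).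
rewrite E. unfold Rminus at 1.
rewrite (Rplus_comm (RInt g 0 t')), Rplus_assoc, Rplus_opp_r, Rplus_0_r.
destruct (Rle_or_lt t' t) as [H|H].
- rewrite (Rabs_pos_eq (t - t')), Rmult_comm by lra. apply abs_RInt_le_const; auto.
- rewrite <- (opp_RInt_swap g t t') by auto.
  change (Rabs (- RInt g t t') <= M * Rabs (t - t')).
  rewrite Rabs_Ropp, (Rabs_left (t - t')), Rmult_comm by lra.
  replace (- (t - t')) with (t' - t) by ring. apply abs_RInt_le_const; auto. lra.
Qed.

Ltac case_index7 i Hi :=
  assert (i = 1 \/ i = 2 \/ i = 3 \/ i = 4 \/ i = 5 \/ i = 6 \/ i = 7)%nat as Hcase by lia;
  clear Hi; destruct Hcase as [->|[->|[->|[->|[->|[->| ->]]]]]].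

(** * Picard iteration *)

Definition norm7 (v : vec7) : R :=
  Rabs (v 1%nat) + Rabs (v 2%nat) + Rabs (v 3%nat) + Rabs (v 4%nat) +
  Rabs (v 5%nat) + Rabs (v 6%nat) + Rabs (v 7%nat).

Lemma Rabs_le_norm7 (v : vec7) (i : nat) : (1 <= i <= 7)%nat -> Rabs (v i) <= norm7 v.
Proof.
intros Hi. unfold norm7.
pose proof (Rabs_pos (v 1%nat)); pose proof (Rabs_pos (v 2%nat)); pose proof (Rabs_pos (v 3%nat));
pose proof (Rabs_pos (v 4%nat)); pose proof (Rabs_pos (v 5%nat)); pose proof (Rabs_pos (v 6%nat));
pose proof (Rabs_pos (v 7%nat)).
case_index7 i Hi; lra.
Qed.

Lemma norm7_ge_0 (v : vec7) : 0 <= norm7 v.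
Proof. pose proof (Rabs_le_norm7 v 1 ltac:(lia)); pose proof (Rabs_pos (v 1%nat)); lra. Qed.

Lemma norm7_le (v : vec7) (B : R) :
  (forall i, (1 <= i <= 7)%nat -> Rabs (v i) <= B) -> norm7 v <= 7 * B.
Proof.
intros H. unfold norm7.
pose proof (H 1%nat ltac:(lia)); pose proof (H 2%nat ltac:(lia)); pose proof (H 3%nat ltac:(lia));
pose proof (H 4%nat ltac:(lia)); pose proof (H 5%nat ltac:(lia)); pose proof (H 6%nat ltac:(lia));
pose proof (H 7%nat ltac:(lia)). lra.
Qed.

Section Picard.
Variable F : vec7 -> vec7.
Variables M L : R.
Hypothesis M_ge_0 : 0 <= M.
Hypothesis L_gt_0 : 0 < L.
Hypothesis F_bounded : forall v i, (1 <= i <= 7)%nat -> Rabs (F v i) <= M.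
Hypothesis F_lipschitz : forall v w i, (1 <= i <= 7)%nat ->
  Rabs (F v i - F w i) <= L * norm7 (fun j => v j - w j).
Variable y0 : vec7.

Fixpoint picard_iter (n : nat) (t : R) : vec7 :=
  match n with
  | O => y0
  | S n => fun i => y0 i + RInt (fun s => F (picard_iter n s) i) 0 t
  end.

Lemma F_comp_lipschitz (Y : R -> vec7) (K : R) :
  (forall i t t', (1 <= i <= 7)%nat -> Rabs (Y t i - Y t' i) <= K * Rabs (t - t')) ->
  forall i t t', (1 <= i <= 7)%nat ->
  Rabs (F (Y t) i - F (Y t') i) <= L * (7 * K) * Rabs (t - t').
Proof.
intros H i t t' Hi. eapply Rle_trans; [apply F_lipschitz; auto|].
rewrite Rmult_assoc. apply Rmult_le_compat_l; [lra|].
replace (7 * K * Rabs (t - t')) with (7 * (K * Rabs (t - t'))) by ring.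
apply norm7_le. intros j Hj. apply H; auto.
Qed.

Lemma picard_iter_lipschitz (n : nat) :
  forall i t t', (1 <= i <= 7)%nat ->
  Rabs (picard_iter n t i - picard_iter n t' i) <= M * Rabs (t - t').
Proof.
induction n as [|n IH]; intros i t t' Hi; simpl.
- rewrite Rminus_diag, Rabs_R0. pose proof (Rabs_pos (t - t')). nra.
- rewrite Rminus_plus_l_l.
  apply (RInt_0_lipschitz _ (L * (7 * M))).
  + intros s s'. apply (F_comp_lipschitz (picard_iter n) M IH); auto.
  + intros s. apply F_bounded; auto.
Qed.

Lemma ex_RInt_picard_iter (n i : nat) (a b : R) :
  (1 <= i <= 7)%nat -> ex_RInt (fun s => F (picard_iter n s) i) a b.
Proof.
intros Hi. apply (ex_RInt_lipschitz _ (L * (7 * M))). intros s s'.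
apply (F_comp_lipschitz (picard_iter n) M (picard_iter_lipschitz n)); auto.
Qed.

Definition picard_step_bound (n : nat) (T : R) : R :=
  M * (7 * L) ^ n * Rabs T ^ S n / INR (Factorial.fact (S n)).

Lemma picard_step_le (n : nat) :
  forall t i, (1 <= i <= 7)%nat ->
  Rabs (picard_iter (S n) t i - picard_iter n t i) <= picard_step_bound n t.
Proof.
induction n as [|n IH]; intros t i Hi.
- simpl picard_iter. rewrite Rplus_minus_l.
  replace (picard_step_bound 0 t) with (M * Rabs t ^ 1 / INR 1)
    by (unfold picard_step_bound; simpl; field).
  apply abs_RInt_le_pow; auto.
  + apply (ex_RInt_picard_iter 0); auto.
  + intros s _. simpl. rewrite Rmult_1_r. apply F_bounded; auto.
- change (picard_iter (S (S n)) t i) with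
    (y0 i + RInt (fun s => F (picard_iter (S n) s) i) 0 t).
  change (picard_iter (S n) t i) with (y0 i + RInt (fun s => F (picard_iter n s) i) 0 t).
  rewrite Rminus_plus_l_l.
  rewrite <- (RInt_minus (V := R_CompleteNormedModule)) by (apply ex_RInt_picard_iter; auto).
  assert (Hfact : 0 < INR (Factorial.fact (S n)))
    by (apply lt_0_INR, Factorial.lt_O_fact).
  set (C := L * 7 * M * (7 * L) ^ n / INR (Factorial.fact (S n))).
  assert (HC : 0 <= C).
  { apply Rmult_le_pos; [|left; apply Rinv_0_lt_compat; auto].
    apply Rmult_le_pos; [nra|apply pow_le; lra]. }
  eapply Rle_trans; [apply (abs_RInt_le_pow _ C (S n)); auto|].
  + apply (@ex_RInt_minus R_NormedModule); apply ex_RInt_picard_iter; auto.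
  + intros s _. eapply Rle_trans; [apply F_lipschitz; auto|].
    replace (C * Rabs s ^ S n) with (L * (7 * picard_step_bound n s))
      by (unfold C, picard_step_bound; field; lra).
    apply Rmult_le_compat_l; [lra|]. apply norm7_le. intros j Hj. apply IH; auto.
  + right. unfold C, picard_step_bound.
    change (Factorial.fact (S (S n))) with (S (S n) * Factorial.fact (S n))%nat.
    rewrite mult_INR. simpl pow. field. split; [lra|apply not_0_INR; lia].
Qed.

Lemma picard_step_bound_mono (n : nat) (s T : R) :
  Rabs s <= T -> picard_step_bound n s <= picard_step_bound n T.
Proof.
intros H. unfold picard_step_bound. assert (HT : 0 <= T) by (pose proof (Rabs_pos s); lra).
apply Rmult_le_compat_r; [left; apply Rinv_0_lt_compat, lt_0_INR, Factorial.lt_O_fact|].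
apply Rmult_le_compat_l; [apply Rmult_le_pos; auto; apply pow_le; lra|].
apply pow_incr. rewrite (Rabs_pos_eq T); auto. split; [apply Rabs_pos|lra].
Qed.

(* The step bounds are the terms of M/(7L) (e^(7L|T|) - 1). *)
Lemma ex_series_picard_step_bound (T : R) : ex_series (fun n => picard_step_bound n T).
Proof.
set (x := 7 * L * Rabs T).
assert (Hexp : ex_series (fun n => x ^ n / INR (Factorial.fact n))).
{ apply ex_series_ext with (fun n => scal (pow_n x n) (/ INR (Factorial.fact n))).
  - intros n. rewrite pow_n_pow. reflexivity.
  - eexists. exact (is_exp_Reals x). }
apply ex_series_incr_1, (ex_series_scal_l (M / (7 * L))) in Hexp.
apply ex_series_ext with (2 := Hexp). intros n.
change (scal (M / (7 * L)) (x ^ S n / INR (Factorial.fact (S n))))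
  with (M / (7 * L) * (x ^ S n / INR (Factorial.fact (S n)))).
unfold picard_step_bound, x. rewrite !Rpow_mult_distr. simpl pow.
match goal with |- ?a = ?b => change (@eq R a b) end.
field. split; [apply not_0_INR, Factorial.fact_neq_0|lra].
Qed.

Definition picard_limit (t : R) : vec7 :=
  fun i => y0 i + Series (fun n => picard_iter (S n) t i - picard_iter n t i).

Definition picard_tail (n : nat) (T : R) : R := Series (fun k => picard_step_bound (n + k) T).

Lemma sum_picard_steps (n : nat) (t : R) (i : nat) :
  sum_f_R0 (fun k => picard_iter (S k) t i - picard_iter k t i) n = picard_iter (S n) t i - y0 i.
Proof. induction n as [|n IH]; [reflexivity|]. rewrite tech5, IH. ring. Qed.

Lemma picard_limit_approx (n : nat) (t : R) (i : nat) (T : R) :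
  (1 <= i <= 7)%nat -> Rabs t <= T ->
  Rabs (picard_limit t i - picard_iter (S n) t i) <= picard_tail (S n) T.
Proof.
intros Hi Ht.
set (d := fun k => picard_iter (S k) t i - picard_iter k t i).
assert (Hd : forall k, Rabs (d k) <= picard_step_bound k T).
{ intros k. eapply Rle_trans; [apply (picard_step_le k t i Hi)|]. apply picard_step_bound_mono; auto. }
assert (Htail : ex_series (fun k => picard_step_bound (S n + k) T))
  by apply (ex_series_incr_n (fun k => picard_step_bound k T)), ex_series_picard_step_bound.
assert (Hex : ex_series d)
  by (apply (ex_series_le d (fun k => picard_step_bound k T));
      [exact Hd|apply ex_series_picard_step_bound]).
unfold picard_limit. fold d. rewrite (Series_incr_n d (S n)) by (auto; lia).
simpl pred. unfold d at 1. rewrite sum_picard_steps.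
replace (y0 i + (picard_iter (S n) t i - y0 i + Series (fun k => d (S n + k)%nat)) -
         picard_iter (S n) t i) with (Series (fun k => d (S n + k)%nat)) by ring.
eapply Rle_trans.
- apply Series_Rabs.
  apply (ex_series_le (fun k => Rabs (d (S n + k)%nat)) (fun k => picard_step_bound (S n + k) T));
    auto.
  intros k. change norm with Rabs. rewrite Rabs_Rabsolu. apply Hd.
- apply Series_le; auto. intros k; split; [apply Rabs_pos|apply Hd].
Qed.

Lemma picard_tail_small (T eps : R) :
  0 < eps -> exists N, forall n, (N <= n)%nat -> picard_tail (S n) T < eps.
Proof.
intros He.
assert (Hlim : is_lim_seq (fun n => sum_f_R0 (fun k => picard_step_bound k T) n)
                 (Series (fun k => picard_step_bound k T))).
{ apply (is_lim_seq_ext (sum_n (fun k => picard_step_bound k T))); [intro; apply sum_n_Reals|].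
  exact (Series_correct _ (ex_series_picard_step_bound T)). }
apply is_lim_seq_spec in Hlim. destruct (Hlim (mkposreal eps He)) as [N HN].
exists N. intros n Hn. unfold picard_tail.
rewrite (Series_incr_n (fun k => picard_step_bound k T) (S n) ltac:(lia) (ex_series_picard_step_bound T))
  in HN.
specialize (HN n Hn). simpl in HN |- *. apply Rabs_def2 in HN. lra.
Qed.

Lemma picard_limit_lipschitz (i : nat) (t t' : R) :
  (1 <= i <= 7)%nat -> Rabs (picard_limit t i - picard_limit t' i) <= M * Rabs (t - t').
Proof.
intros Hi. apply le_epsilon. intros eps He.
set (T := Rmax (Rabs t) (Rabs t')).
destruct (picard_tail_small T (eps / 2) ltac:(lra)) as [n Hn].
specialize (Hn n (le_n n)).
pose proof (picard_limit_approx n t i T Hi (Rmax_l _ _)) as Ht.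
pose proof (picard_limit_approx n t' i T Hi (Rmax_r _ _)) as Ht'.
pose proof (picard_iter_lipschitz (S n) i t t' Hi) as Hn'.
replace (picard_limit t i - picard_limit t' i) with
  ((picard_limit t i - picard_iter (S n) t i) + (picard_iter (S n) t i - picard_iter (S n) t' i)
   - (picard_limit t' i - picard_iter (S n) t' i)) by ring.
unfold Rminus at 1. eapply Rle_trans; [apply Rabs_triang|].
rewrite Rabs_Ropp. pose proof (Rabs_triang (picard_limit t i - picard_iter (S n) t i)
  (picard_iter (S n) t i - picard_iter (S n) t' i)). lra.
Qed.

Lemma picard_rhs_lipschitz (i : nat) (s s' : R) : (1 <= i <= 7)%nat ->
  Rabs (F (picard_limit s) i - F (picard_limit s') i) <= L * (7 * M) * Rabs (s - s').
Proof.
intros Hi. apply (F_comp_lipschitz picard_limit M); auto.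
intros; apply picard_limit_lipschitz; auto.
Qed.

Lemma ex_RInt_picard_rhs (i : nat) (a b : R) :
  (1 <= i <= 7)%nat -> ex_RInt (fun s => F (picard_limit s) i) a b.
Proof.
intros Hi. apply (ex_RInt_lipschitz _ (L * (7 * M))). intros; apply picard_rhs_lipschitz; auto.
Qed.

Lemma picard_iter_rhs_close (n i : nat) (t : R) : (1 <= i <= 7)%nat ->
  Rabs (RInt (fun s => F (picard_iter (S n) s) i) 0 t - RInt (fun s => F (picard_limit s) i) 0 t)
  <= L * 7 * Rabs t * picard_tail (S n) (Rabs t).
Proof.
intros Hi.
assert (Htail : 0 <= picard_tail (S n) (Rabs t)).
{ eapply Rle_trans; [apply Rabs_pos|apply (picard_limit_approx n t i); auto; lra]. }
rewrite <- (RInt_minus (V := R_CompleteNormedModule));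
  [|apply ex_RInt_picard_iter; auto|apply ex_RInt_picard_rhs; auto].
replace (L * 7 * Rabs t * picard_tail (S n) (Rabs t))
  with (L * (7 * picard_tail (S n) (Rabs t)) * Rabs t ^ 1 / INR 1) by (simpl; field).
apply abs_RInt_le_pow.
- apply (@ex_RInt_minus R_NormedModule); [apply ex_RInt_picard_iter|apply ex_RInt_picard_rhs]; auto.
- apply Rmult_le_pos; lra.
- intros s Hs. simpl pow. rewrite Rmult_1_r. eapply Rle_trans; [apply F_lipschitz; auto|].
  apply Rmult_le_compat_l; [lra|]. apply norm7_le. intros j Hj.
  rewrite Rabs_minus_sym. apply picard_limit_approx; auto.
  destruct (Rle_or_lt 0 t).
  + rewrite Rmin_left, Rmax_right in Hs by lra. rewrite !Rabs_pos_eq; lra.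
  + rewrite Rmin_right, Rmax_left in Hs by lra. rewrite Rabs_left1, (Rabs_left t); lra.
Qed.

Lemma picard_limit_integral (i : nat) (t : R) : (1 <= i <= 7)%nat ->
  picard_limit t i = y0 i + RInt (fun s => F (picard_limit s) i) 0 t.
Proof.
intros Hi. apply Rminus_diag_uniq, Rabs_eq_0, Rle_antisym; [|apply Rabs_pos].
apply le_epsilon. intros eps He. rewrite Rplus_0_l.
set (K := 1 + L * 7 * Rabs t).
assert (HK : 0 < K) by (unfold K; pose proof (Rabs_pos t); nra).
assert (He' : 0 < eps / (2 * K)) by (apply Rdiv_lt_0_compat; lra).
destruct (picard_tail_small (Rabs t) (eps / (2 * K)) He') as [n Hn].
pose proof (picard_limit_approx (S n) t i (Rabs t) Hi (Rle_refl _)) as Happrox.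
pose proof (picard_iter_rhs_close n i t Hi) as Hclose.
change (picard_iter (S (S n)) t i) with
  (y0 i + RInt (fun s => F (picard_iter (S n) s) i) 0 t) in Happrox.
pose proof (Hn n (le_n n)) as Hn1. pose proof (Hn (S n) (le_S _ _ (le_n n))) as Hn2.
assert (Hprod : L * 7 * Rabs t * picard_tail (S n) (Rabs t) <= L * 7 * Rabs t * (eps / (2 * K))).
{ pose proof (Rabs_pos t). apply Rmult_le_compat_l; [nra|lra]. }
assert (HKe : eps / (2 * K) + L * 7 * Rabs t * (eps / (2 * K)) = eps / 2)
  by (replace (eps / 2) with (eps / (2 * K) * K) by (field; lra); unfold K; ring).
replace (picard_limit t i - (y0 i + RInt (fun s => F (picard_limit s) i) 0 t)) with
  ((picard_limit t i - (y0 i + RInt (fun s => F (picard_iter (S n) s) i) 0 t)) +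
   (RInt (fun s => F (picard_iter (S n) s) i) 0 t - RInt (fun s => F (picard_limit s) i) 0 t))
  by ring.
eapply Rle_trans; [apply Rabs_triang|]. lra.
Qed.

Lemma is_derive_picard_limit (i : nat) (t : R) : (1 <= i <= 7)%nat ->
  is_derive (fun s => picard_limit s i) t (F (picard_limit t) i).
Proof.
intros Hi.
apply (is_derive_ext (fun s => y0 i + RInt (fun u => F (picard_limit u) i) 0 s));
  [intros s; symmetry; apply picard_limit_integral; auto|].
replace (F (picard_limit t) i) with (0 + F (picard_limit t) i) by ring.
apply (@is_derive_plus R_AbsRing R_NormedModule).
- exact (@is_derive_const R_AbsRing R_NormedModule (y0 i) t).
- apply (is_derive_RInt (fun u => F (picard_limit u) i) _ 0 t).
  + apply filter_forall. intros b. apply (@RInt_correct R_CompleteNormedModule).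
    apply ex_RInt_picard_rhs; auto.
  + apply (continuous_of_lipschitz _ (L * (7 * M))). intros; apply picard_rhs_lipschitz; auto.
Qed.

Lemma picard_limit_0 (i : nat) : picard_limit 0 i = y0 i.
Proof.
unfold picard_limit. rewrite (Series_ext _ (fun k => 0 * 0)), Series_scal_l; [ring|].
intros [|k]; simpl; rewrite !RInt_point; unfold zero; simpl; ring.
Qed.
End Picard.

Theorem picard_global_existence (F : vec7 -> vec7) (M L : R) (y0 : vec7) :
  0 <= M -> 0 < L ->
  (forall v i, (1 <= i <= 7)%nat -> Rabs (F v i) <= M) ->
  (forall v w i, (1 <= i <= 7)%nat -> Rabs (F v i - F w i) <= L * norm7 (fun j => v j - w j)) ->
  exists Y : R -> vec7, (forall i, Y 0 i = y0 i) /\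
    forall t i, (1 <= i <= 7)%nat -> is_derive (fun s => Y s i) t (F (Y t) i).
Proof.
intros HM HL Hb Hl. exists (picard_limit F y0). split.
- intros i. apply picard_limit_0.
- intros t i Hi. apply (is_derive_picard_limit F M L); auto.
Qed.

(** * The global flow *)

Lemma constant_of_derive_0 (f : R -> R) : (forall t, is_derive f t 0) -> forall t, f t = f 0.
Proof.
intros H t.
destruct (MVT_cor4 f (fun _ => 0) 0 (Rabs (t - 0)) (fun s _ => H s) t (Rle_refl _)) as [xi [E _]].
lra.
Qed.

(* [u e^(-c s)] is nonincreasing and [u e^(c s)] nondecreasing. *)
Lemma gronwall_zero (u du : R -> R) (c a : R) : 0 <= c ->
  (forall t, is_derive u t (du t)) -> (forall t, 0 <= u t) ->
  (forall t, Rabs (du t) <= c * u t) -> u a = 0 -> forall t, u t = 0.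
Proof.
intros Hc Hd Hpos Hb Ha t.
destruct (Rle_or_lt a t) as [Ht|Ht].
- set (g := fun s => u s * exp (- c * s)).
  assert (Hg : forall s, is_derive g s ((du s - c * u s) * exp (- c * s))).
  { intros s. unfold g. auto_derive; [exists (du s); auto|].
    replace (Derive (fun x => u x) s) with (du s) by (symmetry; apply is_derive_unique, Hd). ring. }
  destruct (MVT_cor4 g _ a (Rabs (t - a)) (fun s _ => Hg s) t (Rle_refl _)) as [xi [E _]].
  assert (Hxi : (du xi - c * u xi) * exp (- c * xi) <= 0).
  { apply Rmult_le_0_r; [|left; apply exp_pos].
    specialize (Hb xi). apply Rabs_le_between in Hb. lra. }
  assert (Hgt : g t <= 0) by (unfold g in E |- *; rewrite Ha in E; nra).
  unfold g in Hgt. pose proof (exp_pos (- c * t)). specialize (Hpos t). nra.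
- set (g := fun s => u s * exp (c * s)).
  assert (Hg : forall s, is_derive g s ((du s + c * u s) * exp (c * s))).
  { intros s. unfold g. auto_derive; [exists (du s); auto|].
    replace (Derive (fun x => u x) s) with (du s) by (symmetry; apply is_derive_unique, Hd). ring. }
  destruct (MVT_cor4 g _ a (Rabs (t - a)) (fun s _ => Hg s) t (Rle_refl _)) as [xi [E _]].
  assert (Hxi : 0 <= (du xi + c * u xi) * exp (c * xi)).
  { apply Rmult_le_pos; [|left; apply exp_pos].
    specialize (Hb xi). apply Rabs_le_between in Hb. lra. }
  assert (Hgt : g t <= 0) by (unfold g in E |- *; rewrite Ha in E; nra).
  unfold g in Hgt. pose proof (exp_pos (c * t)). specialize (Hpos t). nra.
Qed.

(* The ODE in the real coordinates (x1, a1, b1, a2, b2, a3, b3) with z_j = a_j + i b_j. *)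
Definition vf (k : nat) (x a1 b1 a2 b2 a3 b3 : R) : R :=
  match k with
  | 1%nat => -3 * (a1 * (a2 * b3 + b2 * a3) + b1 * (a2 * a3 - b2 * b3))
  | 2%nat => a1 * ((a2 * a2 + b2 * b2) - (a3 * a3 + b3 * b3)) + x * (a2 * b3 + b2 * a3)
  | 3%nat => b1 * ((a2 * a2 + b2 * b2) - (a3 * a3 + b3 * b3)) + x * (a2 * a3 - b2 * b3)
  | 4%nat => a2 * ((a3 * a3 + b3 * b3) - (a1 * a1 + b1 * b1)) + x * (a3 * b1 + b3 * a1)
  | 5%nat => b2 * ((a3 * a3 + b3 * b3) - (a1 * a1 + b1 * b1)) + x * (a3 * a1 - b3 * b1)
  | 6%nat => a3 * ((a1 * a1 + b1 * b1) - (a2 * a2 + b2 * b2)) + x * (a1 * b2 + b1 * a2)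
  | 7%nat => b3 * ((a1 * a1 + b1 * b1) - (a2 * a2 + b2 * b2)) + x * (a1 * a2 - b1 * b2)
  | _ => 0
  end.

Definition vf7 (v : vec7) : vec7 :=
  fun i => vf i (v 1%nat) (v 2%nat) (v 3%nat) (v 4%nat) (v 5%nat) (v 6%nat) (v 7%nat).

Definition dot7 (u v : vec7) : R :=
  u 1%nat * v 1%nat + u 2%nat * v 2%nat + u 3%nat * v 3%nat + u 4%nat * v 4%nat +
  u 5%nat * v 5%nat + u 6%nat * v 6%nat + u 7%nat * v 7%nat.

Definition sqnorm7 (v : vec7) : R := dot7 v v.

Lemma sqnorm7_ge_sqr (v : vec7) (j : nat) : (1 <= j <= 7)%nat -> v j * v j <= sqnorm7 v.
Proof.
intros Hj. unfold sqnorm7, dot7.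
pose proof (Rle_0_sqr (v 1%nat)); pose proof (Rle_0_sqr (v 2%nat)); pose proof (Rle_0_sqr (v 3%nat));
pose proof (Rle_0_sqr (v 4%nat)); pose proof (Rle_0_sqr (v 5%nat)); pose proof (Rle_0_sqr (v 6%nat));
pose proof (Rle_0_sqr (v 7%nat)). unfold Rsqr in *.
case_index7 j Hj; lra.
Qed.

Lemma sqnorm7_ge_0 (v : vec7) : 0 <= sqnorm7 v.
Proof.
pose proof (sqnorm7_ge_sqr v 1 ltac:(lia)). pose proof (Rle_0_sqr (v 1%nat)). unfold Rsqr in *. lra.
Qed.

Lemma vf7_tangent_sphere (v : vec7) : dot7 v (vf7 v) = 0.
Proof. unfold dot7, vf7, vf. ring. Qed.

Ltac rewrite_Derive H :=
  repeat match goal with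
  | |- context [Derive (fun x : R => ?f ?k x) ?t] =>
      change (Derive (fun x : R => f k x) t) with (Derive (f k) t);
      rewrite (is_derive_unique (f k) t _ (H k ltac:(lia)))
  end.

Lemma is_derive_sqnorm7_dev_sqr (f : nat -> R -> R) (D : vec7) (Q0 t : R) :
  (forall i, (1 <= i <= 7)%nat -> is_derive (f i) t (D i)) ->
  is_derive (fun s => (sqnorm7 (fun k => f k s) - Q0) ^ 2) t
    (4 * (sqnorm7 (fun k => f k t) - Q0) * dot7 (fun k => f k t) D).
Proof.
intros HD. unfold sqnorm7, dot7. auto_derive.
- repeat split; eexists; apply HD; lia.
- rewrite_Derive HD. ring.
Qed.

Definition bounded_lipschitz (h : vec7 -> R) : Prop :=
  exists B K, 0 <= B /\ 0 <= K /\ (forall v, Rabs (h v) <= B) /\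
    (forall v w, Rabs (h v - h w) <= K * norm7 (fun j => v j - w j)).

Lemma bounded_lipschitz_const (c : R) : bounded_lipschitz (fun _ => c).
Proof.
exists (Rabs c), 0. repeat split; [apply Rabs_pos|lra|intros; lra|].
intros v w. rewrite Rminus_diag, Rabs_R0, Rmult_0_l. lra.
Qed.

Lemma bounded_lipschitz_plus (f g : vec7 -> R) :
  bounded_lipschitz f -> bounded_lipschitz g -> bounded_lipschitz (fun v => f v + g v).
Proof.
intros [B1 [K1 [HB1 [HK1 [Hb1 Hl1]]]]] [B2 [K2 [HB2 [HK2 [Hb2 Hl2]]]]].
exists (B1 + B2), (K1 + K2). repeat split; [lra|lra| |].
- intros v. eapply Rle_trans; [apply Rabs_triang|]. specialize (Hb1 v); specialize (Hb2 v); lra.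
- intros v w. replace (f v + g v - (f w + g w)) with ((f v - f w) + (g v - g w)) by ring.
  eapply Rle_trans; [apply Rabs_triang|]. specialize (Hl1 v w); specialize (Hl2 v w); lra.
Qed.

Lemma bounded_lipschitz_opp (f : vec7 -> R) :
  bounded_lipschitz f -> bounded_lipschitz (fun v => - f v).
Proof.
intros [B [K [HB [HK [Hb Hl]]]]]. exists B, K. repeat split; auto.
- intros v. rewrite Rabs_Ropp. auto.
- intros v w. replace (- f v - - f w) with (- (f v - f w)) by ring. rewrite Rabs_Ropp. auto.
Qed.

Lemma bounded_lipschitz_minus (f g : vec7 -> R) :
  bounded_lipschitz f -> bounded_lipschitz g -> bounded_lipschitz (fun v => f v - g v).
Proof.
intros Hf Hg. apply (bounded_lipschitz_plus f (fun v => - g v)); auto.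
apply bounded_lipschitz_opp; auto.
Qed.

Lemma bounded_lipschitz_mult (f g : vec7 -> R) :
  bounded_lipschitz f -> bounded_lipschitz g -> bounded_lipschitz (fun v => f v * g v).
Proof.
intros [B1 [K1 [HB1 [HK1 [Hb1 Hl1]]]]] [B2 [K2 [HB2 [HK2 [Hb2 Hl2]]]]].
exists (B1 * B2), (B1 * K2 + B2 * K1). repeat split; [nra|nra| |].
- intros v. rewrite Rabs_mult. apply Rmult_le_compat; auto using Rabs_pos.
- intros v w. replace (f v * g v - f w * g w) with (f v * (g v - g w) + g w * (f v - f w)) by ring.
  eapply Rle_trans; [apply Rabs_triang|]. rewrite !Rabs_mult.
  pose proof (norm7_ge_0 (fun j => v j - w j)).
  apply Rle_trans with (B1 * (K2 * norm7 (fun j => v j - w j)) + B2 * (K1 * norm7 (fun j => v j - w j)));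
    [|nra].
  apply Rplus_le_compat; apply Rmult_le_compat; auto using Rabs_pos.
Qed.

Definition clamp (K y : R) : R := Rmax (- K) (Rmin K y).

Lemma clamp_lipschitz (K x y : R) : 0 <= K -> Rabs (clamp K x - clamp K y) <= Rabs (x - y).
Proof. intros HK. unfold clamp, Rmax, Rmin. repeat destruct Rle_dec; split_Rabs; lra. Qed.

Lemma Rabs_clamp_le (K x : R) : 0 <= K -> Rabs (clamp K x) <= K.
Proof. intros HK. unfold clamp, Rmax, Rmin. repeat destruct Rle_dec; split_Rabs; lra. Qed.

Lemma clamp_id (K x : R) : Rabs x <= K -> clamp K x = x.
Proof. intros H. unfold clamp, Rmax, Rmin. repeat destruct Rle_dec; split_Rabs; lra. Qed.

Lemma bounded_lipschitz_clamp (K : R) (j : nat) :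
  0 <= K -> (1 <= j <= 7)%nat -> bounded_lipschitz (fun v => clamp K (v j)).
Proof.
intros HK Hj. exists K, 1. repeat split; [lra|lra| |].
- intros; apply Rabs_clamp_le; auto.
- intros v w. eapply Rle_trans; [apply clamp_lipschitz; auto|].
  rewrite Rmult_1_l. apply (Rabs_le_norm7 (fun j => v j - w j) j Hj).
Qed.

Definition clamp7 (K : R) (v : vec7) : vec7 := fun j => clamp K (v j).

(* A bounded, globally Lipschitz field which agrees with [vf7] on the cube of side [2K]. *)
Definition vf7_clamped (K : R) (v : vec7) : vec7 := vf7 (clamp7 K v).

Lemma bounded_lipschitz_vf7_clamped (K : R) (i : nat) :
  0 <= K -> (1 <= i <= 7)%nat -> bounded_lipschitz (fun v => vf7_clamped K v i).
Proof.
intros HK Hi. unfold vf7_clamped, vf7, clamp7.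
case_index7 i Hi; unfold vf;
  repeat match goal with
  | |- bounded_lipschitz (fun _ => ?c) => apply bounded_lipschitz_const
  | |- bounded_lipschitz (fun v => @?f v + @?g v) => apply (bounded_lipschitz_plus f g)
  | |- bounded_lipschitz (fun v => @?f v - @?g v) => apply (bounded_lipschitz_minus f g)
  | |- bounded_lipschitz (fun v => @?f v * @?g v) => apply (bounded_lipschitz_mult f g)
  | |- bounded_lipschitz (fun v => clamp ?K (v ?j)) => apply bounded_lipschitz_clamp; [assumption|lia]
  end.
Qed.

Lemma bounded_lipschitz7 (F : vec7 -> vec7) :
  (forall i, (1 <= i <= 7)%nat -> bounded_lipschitz (fun v => F v i)) ->
  exists M L, 0 <= M /\ 0 < L /\ (forall v i, (1 <= i <= 7)%nat -> Rabs (F v i) <= M) /\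
    (forall v w i, (1 <= i <= 7)%nat -> Rabs (F v i - F w i) <= L * norm7 (fun j => v j - w j)).
Proof.
intros H.
destruct (H 1%nat ltac:(lia)) as [B1 [K1 [? [? [Hb1 Hl1]]]]].
destruct (H 2%nat ltac:(lia)) as [B2 [K2 [? [? [Hb2 Hl2]]]]].
destruct (H 3%nat ltac:(lia)) as [B3 [K3 [? [? [Hb3 Hl3]]]]].
destruct (H 4%nat ltac:(lia)) as [B4 [K4 [? [? [Hb4 Hl4]]]]].
destruct (H 5%nat ltac:(lia)) as [B5 [K5 [? [? [Hb5 Hl5]]]]].
destruct (H 6%nat ltac:(lia)) as [B6 [K6 [? [? [Hb6 Hl6]]]]].
destruct (H 7%nat ltac:(lia)) as [B7 [K7 [? [? [Hb7 Hl7]]]]].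
exists (B1 + B2 + B3 + B4 + B5 + B6 + B7), (K1 + K2 + K3 + K4 + K5 + K6 + K7 + 1).
repeat split; [lra|lra| |].
- intros v i Hi. case_index7 i Hi;
    [specialize (Hb1 v)|specialize (Hb2 v)|specialize (Hb3 v)|specialize (Hb4 v)
    |specialize (Hb5 v)|specialize (Hb6 v)|specialize (Hb7 v)]; lra.
- intros v w i Hi. pose proof (norm7_ge_0 (fun j => v j - w j)).
  case_index7 i Hi;
    [specialize (Hl1 v w)|specialize (Hl2 v w)|specialize (Hl3 v w)|specialize (Hl4 v w)
    |specialize (Hl5 v w)|specialize (Hl6 v w)|specialize (Hl7 v w)]; nra.
Qed.

Lemma Rabs_sum7_le (a1 a2 a3 a4 a5 a6 a7 : R) :
  Rabs (a1 + a2 + a3 + a4 + a5 + a6 + a7) <=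
  Rabs a1 + Rabs a2 + Rabs a3 + Rabs a4 + Rabs a5 + Rabs a6 + Rabs a7.
Proof. repeat (eapply Rle_trans; [apply Rabs_triang|apply Rplus_le_compat_r]). lra. Qed.

Lemma Rabs_dot7_le (u w : vec7) (A B : R) :
  (forall j, (1 <= j <= 7)%nat -> Rabs (u j) <= A) ->
  (forall j, (1 <= j <= 7)%nat -> Rabs (w j) <= B) ->
  Rabs (dot7 u w) <= 7 * (A * B).
Proof.
intros Hu Hw.
assert (Hj : forall j, (1 <= j <= 7)%nat -> Rabs (u j * w j) <= A * B).
{ intros j Hj. rewrite Rabs_mult. apply Rmult_le_compat; auto using Rabs_pos. }
unfold dot7. eapply Rle_trans; [apply Rabs_sum7_le|].
pose proof (Hj 1%nat ltac:(lia)); pose proof (Hj 2%nat ltac:(lia)); pose proof (Hj 3%nat ltac:(lia));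
pose proof (Hj 4%nat ltac:(lia)); pose proof (Hj 5%nat ltac:(lia)); pose proof (Hj 6%nat ltac:(lia));
pose proof (Hj 7%nat ltac:(lia)). lra.
Qed.

Lemma clamp_dev_le (Q0 Q y : R) :
  0 <= Q0 -> y * y <= Q -> Rabs (y - clamp (Q0 + 1) y) <= Rabs (Q - Q0).
Proof.
intros HQ0 Hy. destruct (Rle_or_lt (Rabs y) (Q0 + 1)) as [H|H].
- rewrite clamp_id, Rminus_diag, Rabs_R0 by auto. pose proof (Rabs_pos (Q - Q0)). lra.
- assert (Habs : Rabs (y - clamp (Q0 + 1) y) <= Rabs y).
  { unfold clamp, Rmax, Rmin. repeat destruct Rle_dec; split_Rabs; lra. }
  assert (E : y * y = Rabs y * Rabs y) by (rewrite <- Rabs_mult, Rabs_pos_eq; nra).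
  rewrite (Rabs_pos_eq (Q - Q0)); nra.
Qed.

(* Since [vf7] is tangent to spheres, the clamped field is tangent up to the clamping error. *)
Lemma dot_vf7_clamped_le (Q0 M : R) (v : vec7) : 0 <= Q0 ->
  (forall i, (1 <= i <= 7)%nat -> Rabs (vf7_clamped (Q0 + 1) v i) <= M) ->
  Rabs (dot7 v (vf7_clamped (Q0 + 1) v)) <= 7 * M * Rabs (sqnorm7 v - Q0).
Proof.
intros HQ0 HM.
replace (dot7 v (vf7_clamped (Q0 + 1) v))
  with (dot7 (fun j => v j - clamp7 (Q0 + 1) v j) (vf7_clamped (Q0 + 1) v)).
- replace (7 * M * Rabs (sqnorm7 v - Q0)) with (7 * (Rabs (sqnorm7 v - Q0) * M)) by ring.
  apply Rabs_dot7_le; auto.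
  intros j Hj. apply clamp_dev_le; auto. apply sqnorm7_ge_sqr; auto.
- unfold vf7_clamped.
  transitivity (dot7 v (vf7 (clamp7 (Q0 + 1) v)) -
                dot7 (clamp7 (Q0 + 1) v) (vf7 (clamp7 (Q0 + 1) v))).
  + unfold dot7. ring.
  + rewrite vf7_tangent_sphere. ring.
Qed.

Lemma clamped_solution_sqnorm7_const (Q0 M : R) (Y : R -> vec7) :
  0 <= Q0 -> 0 <= M -> sqnorm7 (Y 0) = Q0 ->
  (forall v i, (1 <= i <= 7)%nat -> Rabs (vf7_clamped (Q0 + 1) v i) <= M) ->
  (forall t i, (1 <= i <= 7)%nat -> is_derive (fun s => Y s i) t (vf7_clamped (Q0 + 1) (Y t) i)) ->
  forall t, sqnorm7 (Y t) = Q0.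
Proof.
intros HQ0 HM HY0 Hb HY t.
assert (Hdev : forall t, (sqnorm7 (Y t) - Q0) ^ 2 = 0).
{ apply (gronwall_zero _ (fun s => 4 * (sqnorm7 (Y s) - Q0) * dot7 (Y s) (vf7_clamped (Q0 + 1) (Y s)))
    (28 * M) 0); [lra| | | |].
  - intros s. apply (is_derive_sqnorm7_dev_sqr (fun k s => Y s k)). intros i Hi. apply HY; auto.
  - intros s. apply pow2_ge_0.
  - intros s. pose proof (dot_vf7_clamped_le Q0 M (Y s) HQ0 (fun i Hi => Hb (Y s) i Hi)) as Hd.
    rewrite !Rabs_mult, (Rabs_pos_eq 4) by lra.
    replace ((sqnorm7 (Y s) - Q0) ^ 2) with (Rabs (sqnorm7 (Y s) - Q0) * Rabs (sqnorm7 (Y s) - Q0))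
      by (rewrite <- Rabs_mult, Rabs_pos_eq; [ring|apply Rle_0_sqr]).
    pose proof (Rabs_pos (sqnorm7 (Y s) - Q0)). nra.
  - rewrite HY0. ring. }
destruct (Req_dec (sqnorm7 (Y t)) Q0) as [|Hne]; auto.
exfalso. apply (pow_nonzero (sqnorm7 (Y t) - Q0) 2); auto. lra.
Qed.

Lemma vf7_global_existence (y0 : vec7) :
  exists Y : R -> vec7, (forall i, Y 0 i = y0 i) /\
    forall t i, (1 <= i <= 7)%nat -> is_derive (fun s => Y s i) t (vf7 (Y t) i).
Proof.
set (Q0 := sqnorm7 y0). pose proof (sqnorm7_ge_0 y0) as HQ0. fold Q0 in HQ0.
destruct (bounded_lipschitz7 (vf7_clamped (Q0 + 1))) as [M [L [HM [HL [Hb Hl]]]]];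
  [intros i Hi; apply bounded_lipschitz_vf7_clamped; auto; lra|].
destruct (picard_global_existence _ M L y0 HM HL Hb Hl) as [Y [HY0 HY]].
exists Y. split; auto. intros t i Hi.
assert (HQ : sqnorm7 (Y t) = Q0).
{ apply (clamped_solution_sqnorm7_const Q0 M Y); auto.
  unfold Q0, sqnorm7, dot7. rewrite !HY0. reflexivity. }
assert (Hinside : forall j, (1 <= j <= 7)%nat -> clamp (Q0 + 1) (Y t j) = Y t j).
{ intros j Hj. apply clamp_id. pose proof (sqnorm7_ge_sqr (Y t) j Hj) as Hsq.
  rewrite HQ in Hsq. pose proof (Rabs_pos (Y t j)).
  assert (E : Y t j * Y t j = Rabs (Y t j) * Rabs (Y t j)) by (rewrite <- Rabs_mult, Rabs_pos_eq; nra).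
  nra. }
replace (vf7 (Y t) i) with (vf7_clamped (Q0 + 1) (Y t) i); [apply HY; auto|].
unfold vf7_clamped, vf7, clamp7. rewrite !Hinside by lia. reflexivity.
Qed.

(** * Complex form of the equations *)

Lemma is_derive_C_components (f : R -> C) (t : R) (l : C) : is_derive f t l ->
  is_derive (fun s => Re (f s)) t (Re l) /\ is_derive (fun s => Im (f s)) t (Im l).
Proof.
intros H. split.
- apply (filterdiff_comp' f (fun x : C => fst x) t (fun y => scal y l) (fun x : C => fst x)) in H;
    [exact H|apply filterdiff_linear, is_linear_fst].
- apply (filterdiff_comp' f (fun x : C => snd x) t (fun y => scal y l) (fun x : C => snd x)) in H;
    [exact H|apply filterdiff_linear, is_linear_snd].
Qed.

Lemma is_derive_C_of_components (f : R -> C) (t : R) (l : C) :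
  is_derive (fun s => Re (f s)) t (Re l) -> is_derive (fun s => Im (f s)) t (Im l) ->
  is_derive f t l.
Proof.
intros Hre Him.
apply (is_derive_ext (fun s => (Re (f s), Im (f s)) : C)); [intros s; destruct (f s); reflexivity|].
replace l with ((Re l, Im l) : C) by (destruct l; reflexivity).
apply (filterdiff_comp'_2 _ _ (fun u v => (u, v) : C) t _ _ (fun u v => (u, v) : C) Hre Him).
apply filterdiff_linear, (is_linear_ext (fun x => x)); [intros [u v]; reflexivity|apply is_linear_id].
Qed.

(* Right-hand side of the equation for [z1]; those for [z2], [z3] are its cyclic shifts. *)
Definition zdot (x : R) (z1 z2 z3 : C) : C :=
  Cplus (Cmult z1 (RtoC (Cmod z2 ^ 2 - Cmod z3 ^ 2))) (Cmult (Cmult Ci (RtoC x)) (Cconj (Cmult z2 z3))).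

Lemma Re_Im_zdot (x : R) (z1 z2 z3 : C) :
  let v := embed x z1 z2 z3 in
  (Re (zdot x z1 z2 z3) = vf7 v 2%nat /\ Im (zdot x z1 z2 z3) = vf7 v 3%nat) /\
  (Re (zdot x z2 z3 z1) = vf7 v 4%nat /\ Im (zdot x z2 z3 z1) = vf7 v 5%nat) /\
  (Re (zdot x z3 z1 z2) = vf7 v 6%nat /\ Im (zdot x z3 z1 z2) = vf7 v 7%nat).
Proof.
intros v. unfold v, zdot. rewrite !Cmod2_alt.
destruct z1, z2, z3. unfold vf7, vf, embed, Cplus, Cmult, Cconj, RtoC, Ci, Re, Im; simpl.
repeat split; ring.
Qed.

Lemma im_prod_eq_vf7 (x : R) (z1 z2 z3 : C) :
  -3 * Im (Cmult (Cmult z1 z2) z3) = vf7 (embed x z1 z2 z3) 1%nat.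
Proof. destruct z1, z2, z3. unfold vf7, vf, embed, Cmult, Re, Im; simpl. ring. Qed.

Lemma is_global_solution_iff (x1 : R -> R) (z1 z2 z3 : R -> C) :
  is_global_solution x1 z1 z2 z3 <->
  forall t i, (1 <= i <= 7)%nat ->
    is_derive (fun s => embed (x1 s) (z1 s) (z2 s) (z3 s) i) t
              (vf7 (embed (x1 t) (z1 t) (z2 t) (z3 t)) i).
Proof.
unfold is_global_solution.
split; intros H t; destruct (Re_Im_zdot (x1 t) (z1 t) (z2 t) (z3 t)) as [[R1 I1] [[R2 I2] [R3 I3]]].
- intros i Hi. destruct (H t) as [Hx [H1 [H2 H3]]]. rewrite (im_prod_eq_vf7 (x1 t)) in Hx.
  fold (zdot (x1 t) (z1 t) (z2 t) (z3 t)) in H1.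
  fold (zdot (x1 t) (z2 t) (z3 t) (z1 t)) in H2.
  fold (zdot (x1 t) (z3 t) (z1 t) (z2 t)) in H3.
  apply is_derive_C_components in H1, H2, H3.
  rewrite R1, I1 in H1. rewrite R2, I2 in H2. rewrite R3, I3 in H3.
  case_index7 i Hi; unfold embed at 1; tauto.
- rewrite (im_prod_eq_vf7 (x1 t)).
  fold (zdot (x1 t) (z1 t) (z2 t) (z3 t)) (zdot (x1 t) (z2 t) (z3 t) (z1 t))
       (zdot (x1 t) (z3 t) (z1 t) (z2 t)).
  split; [|split; [|split]]; [apply (H t 1%nat); lia| | |]; apply is_derive_C_of_components;
    [rewrite R1|rewrite I1|rewrite R2|rewrite I2|rewrite R3|rewrite I3];
    [apply (H t 2%nat)|apply (H t 3%nat)|apply (H t 4%nat)|apply (H t 5%nat)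
    |apply (H t 6%nat)|apply (H t 7%nat)]; lia.
Qed.

(** * First integrals *)

Definition re_prod (v : vec7) : R :=
  v 2%nat * (v 4%nat * v 6%nat - v 5%nat * v 7%nat) - v 3%nat * (v 4%nat * v 7%nat + v 5%nat * v 6%nat).

Definition im_prod (v : vec7) : R :=
  v 2%nat * (v 4%nat * v 7%nat + v 5%nat * v 6%nat) + v 3%nat * (v 4%nat * v 6%nat - v 5%nat * v 7%nat).

Definition sqmod1 (v : vec7) : R := v 2%nat * v 2%nat + v 3%nat * v 3%nat.
Definition sqmod2 (v : vec7) : R := v 4%nat * v 4%nat + v 5%nat * v 5%nat.
Definition sqmod3 (v : vec7) : R := v 6%nat * v 6%nat + v 7%nat * v 7%nat.

Lemma re_prod_embed (x : R) (z1 z2 z3 : C) : re_prod (embed x z1 z2 z3) = Re (Cmult (Cmult z1 z2) z3).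
Proof. destruct z1, z2, z3. unfold re_prod, embed, Cmult, Re; simpl. ring. Qed.

Lemma sqnorm7_embed (x : R) (z1 z2 z3 : C) :
  sqnorm7 (embed x z1 z2 z3) = x ^ 2 + Cmod z1 ^ 2 + Cmod z2 ^ 2 + Cmod z3 ^ 2.
Proof. rewrite !Cmod2_alt. unfold sqnorm7, dot7, embed. ring. Qed.

Lemma sqmod_ge_0 (a b : R) : 0 <= a * a + b * b.
Proof. nra. Qed.

Lemma sqmod_eq_0 (a b : R) : a * a + b * b = 0 -> a = 0 /\ b = 0.
Proof. intros H. split; nra. Qed.

Lemma re_prod_im_prod_sqr (v : vec7) :
  re_prod v * re_prod v + im_prod v * im_prod v = sqmod1 v * sqmod2 v * sqmod3 v.
Proof. unfold re_prod, im_prod, sqmod1, sqmod2, sqmod3. ring. Qed.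

(* Indexed by coordinate first, so that [auto_derive] sees each [f k] as a function of time. *)
Definition is_vf_solution (f : nat -> R -> R) : Prop :=
  forall t k, (1 <= k <= 7)%nat -> is_derive (f k) t (vf7 (fun j => f j t) k).

Section Conservation.
Variable f : nat -> R -> R.
Hypothesis f_sol : is_vf_solution f.

Let f_at (t : R) : vec7 := fun j => f j t.

Lemma re_prod_const (t : R) : re_prod (f_at t) = re_prod (f_at 0).
Proof.
apply (constant_of_derive_0 (fun s => re_prod (f_at s))). intros s.
unfold re_prod, f_at. auto_derive.
- repeat split; eexists; apply f_sol; lia.
- rewrite_Derive (f_sol s). unfold vf7, vf. ring.
Qed.

Lemma sqnorm7_const (t : R) : sqnorm7 (f_at t) = sqnorm7 (f_at 0).
Proof.
apply (constant_of_derive_0 (fun s => sqnorm7 (f_at s))). intros s.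
unfold sqnorm7, dot7, f_at. auto_derive.
- repeat split; eexists; apply f_sol; lia.
- rewrite_Derive (f_sol s). unfold vf7, vf. ring.
Qed.

(* The derivative of |z1|^2 + |z2|^2 is 2|z3|^2(|z2|^2 - |z1|^2) + 4 x1 Im(z1 z2 z3). *)
Lemma sqmod12_deriv_le (v : vec7) :
  Rabs (2 * (v 2%nat * vf7 v 2%nat + v 3%nat * vf7 v 3%nat +
             v 4%nat * vf7 v 4%nat + v 5%nat * vf7 v 5%nat))
  <= 3 * sqnorm7 v * (sqmod1 v + sqmod2 v).
Proof.
set (A := sqmod1 v). set (B := sqmod2 v). set (C := sqmod3 v). set (x := v 1%nat).
assert (HA : 0 <= A) by apply sqmod_ge_0. assert (HB : 0 <= B) by apply sqmod_ge_0.
assert (HC : 0 <= C) by apply sqmod_ge_0. assert (Hx : 0 <= x * x) by nra.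
assert (HQ : sqnorm7 v = x * x + A + B + C)
  by (unfold sqnorm7, dot7, A, B, C, x, sqmod1, sqmod2, sqmod3; ring).
replace (2 * (v 2%nat * vf7 v 2%nat + v 3%nat * vf7 v 3%nat +
             v 4%nat * vf7 v 4%nat + v 5%nat * vf7 v 5%nat))
  with (2 * C * (B - A) + 4 * x * im_prod v)
  by (unfold C, B, A, x, sqmod1, sqmod2, sqmod3, im_prod, vf7, vf; ring).
assert (Him : Rabs (4 * x * im_prod v) <= sqnorm7 v * (A + B)).
{ rewrite <- (Rabs_pos_eq (sqnorm7 v * (A + B))) by (rewrite HQ; nra).
  apply Rsqr_le_abs_0. unfold Rsqr.
  pose proof (re_prod_im_prod_sqr v) as Hsq. fold A B C in Hsq.
  pose proof (Rle_0_sqr (re_prod v)). unfold Rsqr in *.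
  assert (H1 : 4 * (x * x) * C <= (x * x + C) * (x * x + C))
    by (pose proof (Rle_0_sqr (x * x - C)); unfold Rsqr in *; nra).
  assert (H2 : 4 * A * B <= (A + B) * (A + B))
    by (pose proof (Rle_0_sqr (A - B)); unfold Rsqr in *; nra).
  assert (H3 : (4 * (x * x) * C) * (4 * A * B) <= ((x * x + C) * (x * x + C)) * ((A + B) * (A + B)))
    by (apply Rmult_le_compat; nra).
  assert (H4 : (x * x + C) * (x * x + C) <= sqnorm7 v * sqnorm7 v) by (rewrite HQ; nra).
  assert (H5 : 4 * x * im_prod v * (4 * x * im_prod v) <= (4 * (x * x) * C) * (4 * A * B))
    by (pose proof (Rle_0_sqr x); unfold Rsqr in *; nra).
  assert (H6 : 0 <= (A + B) * (A + B)) by nra.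
  nra. }
eapply Rle_trans; [apply Rabs_triang|].
assert (Hlin : Rabs (2 * C * (B - A)) <= 2 * sqnorm7 v * (A + B)).
{ rewrite HQ, Rabs_mult, (Rabs_pos_eq (2 * C)) by lra. split_Rabs; nra. }
lra.
Qed.

Lemma sqmod12_pos :
  0 < sqmod1 (f_at 0) + sqmod2 (f_at 0) -> forall t, 0 < sqmod1 (f_at t) + sqmod2 (f_at t).
Proof.
intros H0 t.
assert (Hnn : forall s, 0 <= sqmod1 (f_at s) + sqmod2 (f_at s))
  by (intros; pose proof (sqmod_ge_0 (f_at s 2%nat) (f_at s 3%nat));
      pose proof (sqmod_ge_0 (f_at s 4%nat) (f_at s 5%nat)); unfold sqmod1, sqmod2; lra).
destruct (Rle_lt_or_eq_dec _ _ (Hnn t)) as [|Heq]; auto. exfalso.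
assert (Hz : sqmod1 (f_at 0) + sqmod2 (f_at 0) = 0); [|lra].
apply (gronwall_zero (fun s => sqmod1 (f_at s) + sqmod2 (f_at s))
  (fun s => 2 * (f_at s 2%nat * vf7 (f_at s) 2%nat + f_at s 3%nat * vf7 (f_at s) 3%nat +
                 f_at s 4%nat * vf7 (f_at s) 4%nat + f_at s 5%nat * vf7 (f_at s) 5%nat))
  (3 * sqnorm7 (f_at 0)) t); auto.
- pose proof (sqnorm7_ge_0 (f_at 0)). lra.
- intros s. unfold sqmod1, sqmod2, f_at. auto_derive.
  + repeat split; eexists; apply f_sol; lia.
  + rewrite_Derive (f_sol s). ring.
- intros s. rewrite <- (sqnorm7_const s). apply sqmod12_deriv_le.
Qed.
End Conservation.

Definition cycle7 (v : vec7) : vec7 := fun k =>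
  match k with
  | 2%nat => v 4%nat | 3%nat => v 5%nat | 4%nat => v 6%nat | 5%nat => v 7%nat
  | 6%nat => v 2%nat | 7%nat => v 3%nat | _ => v k
  end.

Lemma vf7_cycle7 (v : vec7) (k : nat) : vf7 (cycle7 v) k = cycle7 (vf7 v) k.
Proof. do 8 (destruct k as [|k]; [unfold vf7, vf, cycle7; ring|]). reflexivity. Qed.

Lemma is_vf_solution_cycle7 (f : nat -> R -> R) :
  is_vf_solution f -> is_vf_solution (fun k t => cycle7 (fun j => f j t) k).
Proof.
intros Hf t k Hk. rewrite (vf7_cycle7 (fun j => f j t)).
case_index7 k Hk; apply Hf; lia.
Qed.

Lemma sqmod_pairs_pos (f : nat -> R -> R) : is_vf_solution f ->
  let v t := fun j => f j t in
  0 < sqmod1 (v 0) + sqmod2 (v 0) -> 0 < sqmod2 (v 0) + sqmod3 (v 0) ->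
  0 < sqmod3 (v 0) + sqmod1 (v 0) ->
  forall t, 0 < sqmod1 (v t) + sqmod2 (v t) /\ 0 < sqmod2 (v t) + sqmod3 (v t) /\
            0 < sqmod3 (v t) + sqmod1 (v t).
Proof.
intros Hf v H12 H23 H31 t.
pose proof (is_vf_solution_cycle7 f Hf) as Hf'.
pose proof (is_vf_solution_cycle7 _ Hf') as Hf''.
split; [|split].
- apply (sqmod12_pos f Hf); auto.
- apply (sqmod12_pos _ Hf'); auto.
- apply (sqmod12_pos _ Hf''); auto.
Qed.

(** * The torus action and the tangent frame *)

Definition rot7 (p1 p2 : R) (v : vec7) : vec7 := fun k =>
  match k with
  | 2%nat => cos p1 * v 2%nat - sin p1 * v 3%nat
  | 3%nat => sin p1 * v 2%nat + cos p1 * v 3%nat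
  | 4%nat => cos p2 * v 4%nat - sin p2 * v 5%nat
  | 5%nat => sin p2 * v 4%nat + cos p2 * v 5%nat
  | 6%nat => cos (- (p1 + p2)) * v 6%nat - sin (- (p1 + p2)) * v 7%nat
  | 7%nat => sin (- (p1 + p2)) * v 6%nat + cos (- (p1 + p2)) * v 7%nat
  | _ => v k
  end.

(* Infinitesimal generators of the two U(1) factors. *)
Definition gen1 (v : vec7) : vec7 := fun k =>
  match k with
  | 2%nat => - v 3%nat | 3%nat => v 2%nat | 6%nat => v 7%nat | 7%nat => - v 6%nat | _ => 0
  end.

Definition gen2 (v : vec7) : vec7 := fun k =>
  match k with
  | 4%nat => - v 5%nat | 5%nat => v 4%nat | 6%nat => v 7%nat | 7%nat => - v 6%nat | _ => 0
  end.

Lemma act_eq_rot7 (r p1 p2 x : R) (z1 z2 z3 : C) (i : nat) :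
  act r p1 p2 x z1 z2 z3 i = r * rot7 p1 p2 (embed x z1 z2 z3) i.
Proof.
destruct z1, z2, z3.
do 8 (destruct i as [|i]; [unfold act, embed, rot7, eiC, Cmult, RtoC, Re, Im; simpl; ring|]).
unfold act, embed, rot7. ring.
Qed.

Lemma rot7_0 (v : vec7) (i : nat) : rot7 0 0 v i = v i.
Proof.
unfold rot7. rewrite Rplus_0_r, Ropp_0, cos_0, sin_0.
do 8 (destruct i as [|i]; [ring|]). reflexivity.
Qed.

Lemma cos_sin_sqr (p : R) : cos p * cos p + sin p * sin p = 1.
Proof. pose proof (sin2_cos2 p). unfold Rsqr in *. lra. Qed.

Section Rotation.
Variables p1 p2 : R.
Let C1 := cos_sin_sqr p1.
Let C2 := cos_sin_sqr p2.

Lemma vf7_rot7 (v : vec7) (k : nat) : vf7 (rot7 p1 p2 v) k = rot7 p1 p2 (vf7 v) k.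
Proof.
pose proof C1; pose proof C2. unfold vf7, rot7. rewrite cos_neg, sin_neg, cos_plus, sin_plus.
do 8 (destruct k as [|k]; [unfold vf; nsatz|]). reflexivity.
Qed.

Lemma re_prod_rot7 (v : vec7) : re_prod (rot7 p1 p2 v) = re_prod v.
Proof.
pose proof C1; pose proof C2. unfold re_prod, rot7.
rewrite cos_neg, sin_neg, cos_plus, sin_plus. nsatz.
Qed.

Lemma sqmod_rot7 (v : vec7) :
  sqmod1 (rot7 p1 p2 v) = sqmod1 v /\ sqmod2 (rot7 p1 p2 v) = sqmod2 v /\
  sqmod3 (rot7 p1 p2 v) = sqmod3 v.
Proof.
pose proof (cos_sin_sqr (- (p1 + p2))). pose proof C1; pose proof C2.
unfold sqmod1, sqmod2, sqmod3, rot7. repeat split; nsatz.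
Qed.
End Rotation.

(* The partial derivatives of (r, p1, p2, t) |-> r rot7 p1 p2 (v t) at the point
   P = rot7 p1 p2 (v t): P, r gen1 P, r gen2 P and r vf7 P. *)
Definition tangent_frame (r : R) (P : vec7) (k : nat) : vec7 := fun i =>
  match k with
  | 0%nat => P i
  | 1%nat => r * gen1 P i
  | 2%nat => r * gen2 P i
  | _ => r * vf7 P i
  end.

Lemma is_derive_rot7_r (r p1 p2 : R) (v : vec7) (i : nat) :
  is_derive (fun s => s * rot7 p1 p2 v i) r (tangent_frame r (rot7 p1 p2 v) 0 i).
Proof. unfold tangent_frame. auto_derive; auto. ring. Qed.

Lemma is_derive_rot7_p1 (r p1 p2 : R) (v : vec7) (i : nat) :
  is_derive (fun s => r * rot7 s p2 v i) p1 (tangent_frame r (rot7 p1 p2 v) 1 i).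
Proof.
unfold tangent_frame, gen1, rot7.
do 8 (destruct i as [|i]; [auto_derive; auto; ring|]). auto_derive; auto; ring.
Qed.

Lemma is_derive_rot7_p2 (r p1 p2 : R) (v : vec7) (i : nat) :
  is_derive (fun s => r * rot7 p1 s v i) p2 (tangent_frame r (rot7 p1 p2 v) 2 i).
Proof.
unfold tangent_frame, gen2, rot7.
do 8 (destruct i as [|i]; [auto_derive; auto; ring|]). auto_derive; auto; ring.
Qed.

Lemma is_derive_rot7_t (f : nat -> R -> R) (r p1 p2 t : R) (i : nat) :
  is_vf_solution f -> (1 <= i <= 7)%nat ->
  is_derive (fun s => r * rot7 p1 p2 (fun j => f j s) i) t
    (tangent_frame r (rot7 p1 p2 (fun j => f j t)) 3 i).
Proof.
intros Hf Hi. unfold tangent_frame. rewrite vf7_rot7. unfold rot7.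
case_index7 i Hi; auto_derive; try (repeat split; eexists; apply Hf; lia);
  rewrite_Derive (Hf t); ring.
Qed.

Lemma phi0_diag12 (u w : vec7) : phi0 u u w = 0.
Proof. unfold phi0, dx3. ring. Qed.

Lemma phi0_diag13 (u v : vec7) : phi0 u v u = 0.
Proof. unfold phi0, dx3. ring. Qed.

Lemma phi0_diag23 (u v : vec7) : phi0 u v v = 0.
Proof. unfold phi0, dx3. ring. Qed.

Lemma phi0_perm_eq_0 (u v w : vec7) : phi0 u v w = 0 ->
  phi0 v u w = 0 /\ phi0 u w v = 0 /\ phi0 w v u = 0 /\ phi0 v w u = 0 /\ phi0 w u v = 0.
Proof. unfold phi0, dx3. intros H. repeat split; lra. Qed.

Lemma phi0_family_eq_0 (e : nat -> vec7) :
  phi0 (e 0%nat) (e 1%nat) (e 2%nat) = 0 -> phi0 (e 0%nat) (e 1%nat) (e 3%nat) = 0 ->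
  phi0 (e 0%nat) (e 2%nat) (e 3%nat) = 0 -> phi0 (e 1%nat) (e 2%nat) (e 3%nat) = 0 ->
  forall j k l, (j < 4)%nat -> (k < 4)%nat -> (l < 4)%nat -> phi0 (e j) (e k) (e l) = 0.
Proof.
intros H012 H013 H023 H123.
apply phi0_perm_eq_0 in H012 as P012, H013 as P013, H023 as P023, H123 as P123.
intros j k l Hj Hk Hl.
destruct j as [|[|[|[|j]]]]; try lia; destruct k as [|[|[|[|k]]]]; try lia;
  destruct l as [|[|[|[|l]]]]; try lia;
  first [apply phi0_diag12|apply phi0_diag13|apply phi0_diag23|tauto].
Qed.

Lemma phi0_ext (u v w u' v' w' : vec7) :
  (forall i, (1 <= i <= 7)%nat -> u i = u' i /\ v i = v' i /\ w i = w' i) ->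
  phi0 u v w = phi0 u' v' w'.
Proof.
intros H.
destruct (H 1%nat ltac:(lia)) as [? [? ?]]; destruct (H 2%nat ltac:(lia)) as [? [? ?]];
destruct (H 3%nat ltac:(lia)) as [? [? ?]]; destruct (H 4%nat ltac:(lia)) as [? [? ?]];
destruct (H 5%nat ltac:(lia)) as [? [? ?]]; destruct (H 6%nat ltac:(lia)) as [? [? ?]];
destruct (H 7%nat ltac:(lia)) as [? [? ?]].
unfold phi0, dx3. congruence.
Qed.

Lemma phi0_tangent_frame (r : R) (P : vec7) : re_prod P = 0 ->
  forall j k l, (j < 4)%nat -> (k < 4)%nat -> (l < 4)%nat ->
  phi0 (tangent_frame r P j) (tangent_frame r P k) (tangent_frame r P l) = 0.
Proof.
intros Hre. apply phi0_family_eq_0;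
  unfold phi0, dx3, tangent_frame, gen1, gen2, vf7, vf.
- transitivity (-3 * (r * r) * re_prod P); [unfold re_prod; ring|rewrite Hre; ring].
- ring.
- ring.
- ring.
Qed.

Lemma dot7_eq_0_l (u w : vec7) : (forall i, (1 <= i <= 7)%nat -> u i = 0) -> dot7 u w = 0.
Proof. intros Hu. unfold dot7. rewrite !Hu by lia. ring. Qed.

Section FrameIndependence.
Variable P : vec7.
Hypothesis re_prod_P : re_prod P = 0.
Hypothesis P12 : 0 < sqmod1 P + sqmod2 P.
Hypothesis P23 : 0 < sqmod2 P + sqmod3 P.
Hypothesis P31 : 0 < sqmod3 P + sqmod1 P.
Variables d0 d1 d2 d3 : R.
Let u : vec7 := fun i => d0 * P i + d1 * gen1 P i + d2 * gen2 P i + d3 * vf7 P i.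
Hypothesis u_eq_0 : forall i, (1 <= i <= 7)%nat -> u i = 0.

Let A_ge_0 : 0 <= sqmod1 P := sqmod_ge_0 (P 2%nat) (P 3%nat).
Let B_ge_0 : 0 <= sqmod2 P := sqmod_ge_0 (P 4%nat) (P 5%nat).
Let C_ge_0 : 0 <= sqmod3 P := sqmod_ge_0 (P 6%nat) (P 7%nat).

Lemma frame_coef0 : d0 = 0.
Proof.
assert (H : d0 * sqnorm7 P = 0).
{ rewrite <- (dot7_eq_0_l u P u_eq_0).
  unfold u, sqnorm7, dot7, gen1, gen2, vf7, vf. ring. }
assert (HQ : 0 < sqnorm7 P).
{ pose proof (Rle_0_sqr (P 1%nat)).
  pose proof A_ge_0 as HA; pose proof B_ge_0 as HB; pose proof C_ge_0 as HC.
  unfold sqnorm7, dot7, sqmod1, sqmod2, sqmod3, Rsqr in *. lra. }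
apply Rmult_integral in H as [|]; [auto|lra].
Qed.

(* Take the inner product of the relation with the [z_j]-component of [P]. *)
Lemma frame_coef3 : d3 = 0.
Proof.
pose proof frame_coef0 as H0. pose proof A_ge_0 as HA; pose proof B_ge_0 as HB; pose proof C_ge_0 as HC.
assert (Him : d3 * im_prod P = 0).
{ pose proof (u_eq_0 1%nat ltac:(lia)) as Hu1. unfold u, gen1, gen2, vf7, vf, im_prod in *.
  rewrite H0 in Hu1. lra. }
destruct (Req_dec (im_prod P) 0) as [Him0|]; [|apply Rmult_integral in Him as [|]; auto; lra].
pose proof (re_prod_im_prod_sqr P) as Hsq. rewrite re_prod_P, Him0 in Hsq.
assert (Hz : sqmod1 P = 0 \/ sqmod2 P = 0 \/ sqmod3 P = 0).
{ symmetry in Hsq. rewrite Rmult_0_l, Rplus_0_l in Hsq.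
  apply Rmult_integral in Hsq as [Hsq|]; [apply Rmult_integral in Hsq as [|]|]; tauto. }
destruct Hz as [Hz|[Hz|Hz]]; apply sqmod_eq_0 in Hz as [Ha Hb].
- assert (H : d3 * (sqmod2 P * sqmod3 P) = 0).
  { rewrite <- (dot7_eq_0_l u
      (fun i => match i with 4%nat => P 4%nat | 5%nat => P 5%nat | _ => 0 end) u_eq_0).
    unfold u, dot7, sqmod2, sqmod3, gen1, gen2, vf7, vf. rewrite H0, Ha, Hb. ring. }
  unfold sqmod1 in *. rewrite Ha, Hb in *.
  apply Rmult_integral in H as [|H]; [auto|apply Rmult_integral in H as [|]; lra].
- assert (H : d3 * (sqmod3 P * sqmod1 P) = 0).
  { rewrite <- (dot7_eq_0_l u
      (fun i => match i with 6%nat => P 6%nat | 7%nat => P 7%nat | _ => 0 end) u_eq_0).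
    unfold u, dot7, sqmod1, sqmod3, gen1, gen2, vf7, vf. rewrite H0, Ha, Hb. ring. }
  unfold sqmod2 in *. rewrite Ha, Hb in *.
  apply Rmult_integral in H as [|H]; [auto|apply Rmult_integral in H as [|]; lra].
- assert (H : d3 * (sqmod1 P * sqmod2 P) = 0).
  { rewrite <- (dot7_eq_0_l u
      (fun i => match i with 2%nat => P 2%nat | 3%nat => P 3%nat | _ => 0 end) u_eq_0).
    unfold u, dot7, sqmod1, sqmod2, gen1, gen2, vf7, vf. rewrite H0, Ha, Hb. ring. }
  unfold sqmod3 in *. rewrite Ha, Hb in *.
  apply Rmult_integral in H as [|H]; [auto|apply Rmult_integral in H as [|]; lra].
Qed.

(* With d0 = d3 = 0 the Gram matrix of gen1 P, gen2 P has determinant AB + BC + CA > 0. *)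
Lemma frame_coef12 : d1 = 0 /\ d2 = 0.
Proof.
pose proof frame_coef0 as H0. pose proof frame_coef3 as H3.
pose proof A_ge_0 as HA; pose proof B_ge_0 as HB; pose proof C_ge_0 as HC.
set (A := sqmod1 P) in *. set (B := sqmod2 P) in *. set (C := sqmod3 P) in *.
assert (E1 : d1 * (A + C) + d2 * C = 0).
{ rewrite <- (dot7_eq_0_l u (gen1 P) u_eq_0).
  unfold u, A, C, dot7, sqmod1, sqmod3, gen1, gen2. rewrite H0, H3. ring. }
assert (E2 : d1 * C + d2 * (B + C) = 0).
{ rewrite <- (dot7_eq_0_l u (gen2 P) u_eq_0).
  unfold u, B, C, dot7, sqmod2, sqmod3, gen1, gen2. rewrite H0, H3. ring. }
assert (Hdet : 0 < A * B + B * C + C * A).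
{ destruct (Rle_lt_or_eq_dec 0 A HA) as [HA'|HA'].
  - pose proof (Rmult_lt_0_compat A (B + C) HA' P23). nra.
  - rewrite <- HA' in *. pose proof (Rmult_lt_0_compat B C ltac:(lra) ltac:(lra)). lra. }
assert (D1 : d1 * (A * B + B * C + C * A) = 0).
{ transitivity ((B + C) * (d1 * (A + C) + d2 * C) - C * (d1 * C + d2 * (B + C))); [ring|].
  rewrite E1, E2. ring. }
assert (D2 : d2 * (A * B + B * C + C * A) = 0).
{ transitivity ((A + C) * (d1 * C + d2 * (B + C)) - C * (d1 * (A + C) + d2 * C)); [ring|].
  rewrite E1, E2. ring. }
apply Rmult_integral in D1 as [|]; apply Rmult_integral in D2 as [|]; split; auto; lra.
Qed.
End FrameIndependence.

Lemma lin_indep_tangent_frame (r : R) (P : vec7) (e : nat -> vec7) :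
  r <> 0 -> re_prod P = 0 -> 0 < sqmod1 P + sqmod2 P -> 0 < sqmod2 P + sqmod3 P ->
  0 < sqmod3 P + sqmod1 P ->
  (forall k i, (k < 4)%nat -> (1 <= i <= 7)%nat -> e k i = tangent_frame r P k i) ->
  lin_indep 4 e.
Proof.
intros Hr Hre H12 H23 H31 He c Hc.
assert (Hrel : forall i, (1 <= i <= 7)%nat ->
  c 0%nat * P i + (c 1%nat * r) * gen1 P i + (c 2%nat * r) * gen2 P i + (c 3%nat * r) * vf7 P i = 0).
{ intros i Hi. rewrite <- (Hc i Hi). cbn [sum_f_R0 Nat.sub].
  rewrite !He by lia. unfold tangent_frame. ring. }
pose proof (frame_coef0 P H12 H23 H31 _ _ _ _ Hrel) as H0.
pose proof (frame_coef3 P Hre H12 H23 H31 _ _ _ _ Hrel) as H3.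
destruct (frame_coef12 P Hre H12 H23 H31 _ _ _ _ Hrel) as [H1 H2].
intros k Hk. destruct k as [|[|[|[|k]]]]; try lia; auto;
  [apply Rmult_integral in H1|apply Rmult_integral in H2|apply Rmult_integral in H3]; tauto.
Qed.

Lemma rot7_0_eq (v : vec7) : rot7 0 0 v = v.
Proof. apply functional_extensionality. apply rot7_0. Qed.

Lemma orbit_diff_eq (x : R) (z1 z2 z3 : C) (k i : nat) : (k < 3)%nat ->
  orbit_diff x z1 z2 z3 k i = tangent_frame 1 (embed x z1 z2 z3) k i.
Proof.
intros Hk. rewrite <- (rot7_0_eq (embed x z1 z2 z3)). unfold orbit_diff.
destruct k as [|[|[|k]]]; try lia; apply is_derive_unique;
  (eapply is_derive_ext; [intros s; symmetry; apply act_eq_rot7|]).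
- apply is_derive_rot7_r.
- apply is_derive_rot7_p1.
- apply is_derive_rot7_p2.
Qed.

(* If two of the z_j vanish, one generator vanishes or both coincide. *)
Lemma orbit_dim3_sqmod_pos (a : R) (w1 w2 w3 : C) : orbit_dim3 a w1 w2 w3 ->
  let P := embed a w1 w2 w3 in
  0 < sqmod1 P + sqmod2 P /\ 0 < sqmod2 P + sqmod3 P /\ 0 < sqmod3 P + sqmod1 P.
Proof.
intros Hdim P.
assert (Hrel : forall c : nat -> R, (forall i, (1 <= i <= 7)%nat ->
    c 0%nat * P i + c 1%nat * gen1 P i + c 2%nat * gen2 P i = 0) -> c 1%nat = 0 /\ c 2%nat = 0).
{ intros c Hc. split; apply Hdim; try lia; intros i Hi; cbn [sum_f_R0 Nat.sub];
    rewrite !orbit_diff_eq by lia; fold P; unfold tangent_frame; rewrite <- (Hc i Hi); ring. }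
assert (Hsplit : forall A B, 0 <= A -> 0 <= B -> (A = 0 -> B = 0 -> False) -> 0 < A + B).
{ intros A B HA HB H. destruct (Req_dec (A + B) 0); [exfalso; apply H|]; lra. }
assert (HA : 0 <= sqmod1 P) by apply sqmod_ge_0.
assert (HB : 0 <= sqmod2 P) by apply sqmod_ge_0.
assert (HC : 0 <= sqmod3 P) by apply sqmod_ge_0.
split; [|split]; apply Hsplit; auto; intros Hs Hs';
  apply sqmod_eq_0 in Hs as [Ha Hb], Hs' as [Hc Hd].
- destruct (Hrel (fun k => match k with 1%nat => 1 | 2%nat => -1 | _ => 0 end)) as [H1 _];
    [|cbv beta iota in H1; lra].
  intros i Hi. unfold gen1, gen2. case_index7 i Hi; cbv beta iota; rewrite ?Ha, ?Hb, ?Hc, ?Hd; ring.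
- destruct (Hrel (fun k => match k with 2%nat => 1 | _ => 0 end)) as [_ H2];
    [|cbv beta iota in H2; lra].
  intros i Hi. unfold gen1, gen2. case_index7 i Hi; cbv beta iota; rewrite ?Ha, ?Hb, ?Hc, ?Hd; ring.
- destruct (Hrel (fun k => match k with 1%nat => 1 | _ => 0 end)) as [H1 _];
    [|cbv beta iota in H1; lra].
  intros i Hi. unfold gen1, gen2. case_index7 i Hi; cbv beta iota; rewrite ?Ha, ?Hb, ?Hc, ?Hd; ring.
Qed.

(** * Orbits of solutions *)

Lemma embed_components (v : vec7) (i : nat) : (1 <= i <= 7)%nat ->
  embed (v 1%nat) (v 2%nat, v 3%nat) (v 4%nat, v 5%nat) (v 6%nat, v 7%nat) i = v i.
Proof. intros Hi. case_index7 i Hi; reflexivity. Qed.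

Lemma global_solution_exists (a : R) (w1 w2 w3 : C) :
  exists (x1 : R -> R) (z1 z2 z3 : R -> C),
    is_global_solution x1 z1 z2 z3 /\ x1 0 = a /\ z1 0 = w1 /\ z2 0 = w2 /\ z3 0 = w3.
Proof.
destruct (vf7_global_existence (embed a w1 w2 w3)) as [Y [HY0 HY]].
exists (fun t => Y t 1%nat), (fun t => (Y t 2%nat, Y t 3%nat)), (fun t => (Y t 4%nat, Y t 5%nat)),
  (fun t => (Y t 6%nat, Y t 7%nat)).
split.
- apply is_global_solution_iff. intros t i Hi.
  apply (is_derive_ext (fun s => Y s i)); [intros s; symmetry; apply (embed_components (Y s)); auto|].
  unfold vf7. rewrite !embed_components by lia. apply HY; auto.
- rewrite !HY0. destruct w1, w2, w3. repeat split.
Qed.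

Section Solution.
Variables (x1 : R -> R) (z1 z2 z3 : R -> C).
Hypothesis sol : is_global_solution x1 z1 z2 z3.

Let f (j : nat) (t : R) : R := embed (x1 t) (z1 t) (z2 t) (z3 t) j.
Let F (r p1 p2 t : R) : vec7 := act r p1 p2 (x1 t) (z1 t) (z2 t) (z3 t).

Lemma is_vf_solution_embed : is_vf_solution f.
Proof. intros t k Hk. apply (proj1 (is_global_solution_iff x1 z1 z2 z3) sol); auto. Qed.

Lemma partial4_act_solution (r p1 p2 t : R) (k i : nat) : (k < 4)%nat -> (1 <= i <= 7)%nat ->
  is_derive (fun s => match k with
                      | 0%nat => F s p1 p2 t i | 1%nat => F r s p2 t i
                      | 2%nat => F r p1 s t i | _ => F r p1 p2 s i end)
    (match k with 0%nat => r | 1%nat => p1 | 2%nat => p2 | _ => t end)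
    (tangent_frame r (rot7 p1 p2 (fun j => f j t)) k i).
Proof.
intros Hk Hi. unfold F.
destruct k as [|[|[|[|k]]]]; try lia;
  (eapply is_derive_ext; [intros s; symmetry; apply act_eq_rot7|]).
- apply is_derive_rot7_r.
- apply is_derive_rot7_p1.
- apply is_derive_rot7_p2.
- apply (is_derive_rot7_t f); auto. apply is_vf_solution_embed.
Qed.

Lemma partial4_act_eq (r p1 p2 t : R) (k i : nat) : (k < 4)%nat -> (1 <= i <= 7)%nat ->
  partial4 F r p1 p2 t k i = tangent_frame r (rot7 p1 p2 (fun j => f j t)) k i.
Proof.
intros Hk Hi. pose proof (partial4_act_solution r p1 p2 t k i Hk Hi) as H.
unfold partial4. destruct k as [|[|[|[|k]]]]; try lia; apply is_derive_unique, H.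
Qed.

Lemma coassociative_act_solution :
  (forall t, re_prod (fun j => f j t) = 0) ->
  (forall t, 0 < sqmod1 (fun j => f j t) + sqmod2 (fun j => f j t) /\
             0 < sqmod2 (fun j => f j t) + sqmod3 (fun j => f j t) /\
             0 < sqmod3 (fun j => f j t) + sqmod1 (fun j => f j t)) ->
  coassociative_param F.
Proof.
intros Hre Hpos r p1 p2 t Hr.
set (P := rot7 p1 p2 (fun j => f j t)).
assert (HreP : re_prod P = 0) by (unfold P; rewrite re_prod_rot7; auto).
destruct (sqmod_rot7 p1 p2 (fun j => f j t)) as [E1 [E2 E3]]. fold P in E1, E2, E3.
destruct (Hpos t) as [H12 [H23 H31]].
rewrite <- E1, <- E2 in H12. rewrite <- E2, <- E3 in H23. rewrite <- E3, <- E1 in H31.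
split; [|split].
- intros i Hi.
  repeat split; eexists;
    [apply (partial4_act_solution r p1 p2 t 0)|apply (partial4_act_solution r p1 p2 t 1)
    |apply (partial4_act_solution r p1 p2 t 2)|apply (partial4_act_solution r p1 p2 t 3)]; auto; lia.
- apply (lin_indep_tangent_frame r P); auto; [lra|]. intros; apply partial4_act_eq; auto.
- intros j k l Hj Hk Hl.
  rewrite (phi0_ext _ _ _ (tangent_frame r P j) (tangent_frame r P k) (tangent_frame r P l))
    by (intros i Hi; rewrite !partial4_act_eq by auto; auto).
  apply phi0_tangent_frame; auto.
Qed.
End Solution.

Theorem theorem6p4 (a : R) (w1 w2 w3 : C) :
  Re (Cmult (Cmult w1 w2) w3) = 0 ->
  orbit_dim3 a w1 w2 w3 ->
  (exists (x1 : R -> R) (z1 z2 z3 : R -> C),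
     is_global_solution x1 z1 z2 z3 /\
     x1 0 = a /\ z1 0 = w1 /\ z2 0 = w2 /\ z3 0 = w3) /\
  (forall (x1 : R -> R) (z1 z2 z3 : R -> C),
     is_global_solution x1 z1 z2 z3 ->
     x1 0 = a -> z1 0 = w1 -> z2 0 = w2 -> z3 0 = w3 ->
     (forall t, Re (Cmult (Cmult (z1 t) (z2 t)) (z3 t)) = 0) /\
     (forall t, x1 t ^ 2 + Cmod (z1 t) ^ 2 + Cmod (z2 t) ^ 2 + Cmod (z3 t) ^ 2
                = a ^ 2 + Cmod w1 ^ 2 + Cmod w2 ^ 2 + Cmod w3 ^ 2) /\
     coassociative_param
       (fun r p1 p2 t => act r p1 p2 (x1 t) (z1 t) (z2 t) (z3 t))).
Proof.
intros HRe Hdim. split; [apply global_solution_exists|].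
intros x1 z1 z2 z3 Hsol H0 H1 H2 H3.
set (f := fun j t => embed (x1 t) (z1 t) (z2 t) (z3 t) j).
pose proof (is_vf_solution_embed x1 z1 z2 z3 Hsol) as Hf. fold f in Hf.
assert (Hinit : (fun j => f j 0) = embed a w1 w2 w3) by (unfold f; rewrite H0, H1, H2, H3; reflexivity).
assert (Hre : forall t, re_prod (fun j => f j t) = 0).
{ intros t. rewrite (re_prod_const f Hf t), Hinit, re_prod_embed. exact HRe. }
destruct (orbit_dim3_sqmod_pos a w1 w2 w3 Hdim) as [P12 [P23 P31]].
rewrite <- Hinit in P12, P23, P31.
split; [|split].
- intros t. rewrite <- (re_prod_embed (x1 t)). exact (Hre t).
- intros t. rewrite <- (sqnorm7_embed (x1 t)), <- (sqnorm7_embed a), <- Hinit.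
  exact (sqnorm7_const f Hf t).
- apply coassociative_act_solution; auto. intros t. apply (sqmod_pairs_pos f Hf); auto.
Qed.
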